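(* Let $T$ be a combinatorial 4-PPT and let $H$ be a subgraph of $T$ with $|V(H)|\ge 3$. Then $H$ has at least $3$ vertices whose reflex angle (in $T$) is contained in the outer face of $H$.
   Context: An angle of a plane embedded graph is a vertex–face incidence. A combinatorial pseudo-triangulation is a combinatorial embedding in the plane (rotation system with designated outer face) of a connected planar simple graph, with a tag ''reflex'' or ''convex'' on each angle, such that every interior face has exactly three convex angles, all angles of the outer face are reflex, and no vertex is incident to more than one reflex angle; it is pointed if every vertex is incident to exactly one reflex angle. A combinatorial 4-PPT is a combinatorial pointed pseudo-triangulation whose interior faces all have size 3 or 4. The subgraph $H$ inherits the embedding of $T$; each vertex of $H$ has exactly one reflex angle in $T$, which lies in some face of $H$. *)

From mathcomp Require Import all_boot.
Set Implicit Arguments. Unset Strict Implicit. Unset Printing Implicit Defensive.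

(* Conventions:
   - D : darts (half-edges), V : vertices; [tail d] is the vertex d leaves.
   - [alpha] : the fixed-point-free involution reversing a dart.
   - [sigma] : rotation system: sigma d is the next dart around tail d.
   - [phi d := sigma (alpha d)] : face permutation; faces = phi-orbits.
   - Angles are identified with darts: dart d represents the angle (corner)
     at vertex [tail d] between [sigma^-1 d] and [d]; this angle lies in
     the face (phi-orbit) of d.  Every vertex-face incidence (with
     multiplicity) is obtained exactly once this way.
   - The outer face is designated by a dart [o] lying on it. *)

Section Maps.
Variables (D V : finType) (tail : D -> V) (alpha sigma : D -> D).

Definition phi (d : D) : D := sigma (alpha d).

Definition adj : rel V :=
  fun u v => [exists d, (tail d == u) && (tail (alpha d) == v)].

(* A combinatorial embedding in the plane of a connected graph:
   rotation system + Euler's formula V - E + F = 2 (genus 0). *)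
Definition plane_map : Prop :=
  [/\ injective sigma /\ (forall d, alpha (alpha d) = d),
      (forall d, alpha d != d),
      (forall d e, fconnect sigma d e = (tail d == tail e)),
      (forall v, exists d, tail d = v)
    & (forall u v, connect adj u v) /\ #|V| + fcard phi D = #|D|./2 + 2].

Definition simple_map : Prop :=
  (forall d, tail (alpha d) != tail d) /\
  (forall d e, tail d = tail e -> tail (alpha d) = tail (alpha e) -> d = e).

Definition same_face (d e : D) : bool := fconnect phi d e.

Definition comb_pointed_PT (reflex : pred D) (o : D) : Prop :=
  [/\ (forall d, ~~ same_face o d ->
          #|[set e | same_face d e & ~~ reflex e]| = 3),
      (forall d, same_face o d -> reflex d)
    & (forall v, #|[set d | (tail d == v) & reflex d]| = 1)].

Definition comb_4PPT (reflex : pred D) (o : D) : Prop :=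
  [/\ plane_map, simple_map, comb_pointed_PT reflex o
    & (forall d, ~~ same_face o d -> (order phi d == 3) || (order phi d == 4))].

Definition subgraph (VH : {set V}) (EH : {set D}) : Prop :=
  forall d, d \in EH -> (alpha d \in EH) && (tail d \in VH).

(* Faces of H (with the embedding inherited from T) are the classes of faces
   of T glued across the edges of T that are not in H (vertices of T not in
   H have all their edges outside H, so they are covered as well). *)
Definition hstep (EH : {set D}) : rel D :=
  fun d e => [|| e == phi d, d == phi e | (d \notin EH) && (e == alpha d)].

Definition same_Hface (EH : {set D}) (d e : D) : bool := connect (hstep EH) d e.

Definition reflex_in_outer_H (reflex : pred D) (o : D) (EH : {set D}) (v : V)
  : bool := [exists d, [&& tail d == v, reflex d & same_Hface EH o d]].

End Maps.

From mathcomp Require Import all_boot all_fingroup zify.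
Set Implicit Arguments. Unset Strict Implicit. Unset Printing Implicit Defensive.

(* The darts lying in the outer face of H carry a connected map of their own:
   its faces are the faces of T inside that face, its edges come from gluing
   across the edges of T not in H, and its vertices are the boundary walks of
   the face together with the vertices of T outside H inside it.  Its Euler
   characteristic is at most 2.  If some edge of H has the outer face on one
   side only, this inequality, Euler's formula for T, the three convex angles
   of each interior face and the at most one reflex angle of each (faces have
   size at most 4) give 2t >= h + 2, where t counts the vertices of H whose
   reflex angle lies in the outer face and h counts the darts of H on it;
   walking along the outer boundary from that edge shows h >= 3, as T is
   simple.  Otherwise the outer face of H contains all of T, and every vertex
   of H qualifies. *)

Section FunctionOrbits.
Variables (T : finType) (f : T -> T).

Lemma fconnect_involution x y : f (f x) = x ->
  fconnect f x y = (y == x) || (y == f x).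
Proof.
move=> fK; apply/idP/idP.
  move/iter_findex => <-; elim: (findex f x y) => [|n /= /orP[] /eqP->].
  - by rewrite eqxx.
  - by rewrite eqxx orbT.
  - by rewrite fK eqxx.
by case/orP=> /eqP->; [apply: connect0 | apply: fconnect1].
Qed.

Hypothesis f_inj : injective f.

Let fsym : connect_sym (frel f) := fconnect_sym f_inj.

Lemma card_fclosed_sum (A P : {pred T}) : fclosed f A ->
  #|[predI A & P]| = \sum_(r in [predI froots f & A]) #|[predI fconnect f r & P]|.
Proof.
move=> clA.
rewrite -sum1_card (partition_big (froot f) [predI froots f & A]) /=.
  apply: eq_bigr => r /andP[rr rA]; rewrite -sum1_card; apply: eq_bigl => x /=.
  rewrite !inE /=.
  have -> : (froot f x == r) = fconnect f r x.
    by rewrite -{1}(eqP rr) (root_connect fsym) fsym.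
  case hrx: (fconnect f r x); last by rewrite !andbF.
  by rewrite andbT -(closed_connect clA hrx) rA.
move=> x /andP[xA _]; rewrite !inE (roots_root fsym) /=.
by rewrite -(closed_connect clA (connect_root _ x)).
Qed.

Lemma fcard_orbit_sets (A : {pred T}) : fclosed f A ->
  fcard f A = #|[set [set y | fconnect f x y] | x in A]|.
Proof.
move=> clA.
have -> : [set [set y | fconnect f x y] | x in A] =
          [set [set y | fconnect f x y] | x in [predI froots f & A]].
  apply/setP=> S; apply/imsetP/imsetP => [[x xA ->]|[x /andP[_ xA] ->]].
    exists (froot f x).
      apply/andP; split; first exact: (roots_root fsym).
      by rewrite -(closed_connect clA (connect_root _ x)).
    by apply/setP=> y; rewrite !inE; apply: same_connect => //; apply: connect_root.
  by exists x.
rewrite card_in_imset /n_comp_mem //.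
move=> x y /andP[rx _] /andP[ry _] /setP e.
have := e y; rewrite !inE connect0 => hxy.
by rewrite -(eqP rx) -(eqP ry); apply/(rootP fsym).
Qed.

(* Each orbit of an involution has two elements, or one when it is a fixed point. *)
Lemma card_involution_fcard (A : {pred T}) : involutive f -> fclosed f A ->
  #|A| + #|[predI A & [pred x | f x == x]]| = 2 * fcard f A.
Proof.
move=> fK clA.
have -> : #|A| = #|[predI A & predT]| by apply: eq_card => x; rewrite !inE andbT.
rewrite !card_fclosed_sum // -big_split /= /n_comp_mem -sum1_card big_distrr /=.
apply: eq_bigr => r _; rewrite muln1.
have orb y : fconnect f r y = (y == r) || (y == f r) := fconnect_involution y (fK r).
have [fr | fr] := eqVneq (f r) r.
  rewrite !(@eq_card1 _ r) // => y; rewrite !inE orb fr orbb ?andbT //.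
  by case: eqP => // ->; rewrite fr eqxx.
rewrite (eq_card (B := pred2 r (f r))) => [|y]; last by rewrite !inE orb andbT.
rewrite card2 eq_sym fr (eq_card0 (A := [predI _ & _])) // => y.
rewrite !inE orb; apply/negbTE; apply/negP => /andP[/orP[] /eqP-> ].
  by rewrite (negbTE fr).
by rewrite fK eq_sym (negbTE fr).
Qed.

End FunctionOrbits.

Section SubPerm.
Variables (T : finType) (f : T -> T) (A : {pred T}).
Hypotheses (f_inj : injective f) (clA : fclosed f A).

Lemma fclosed_in x : x \in A -> f x \in A.
Proof. by rewrite (clA (eqxx (f x))). Qed.

Definition sub_fun (z : {x | x \in A}) : {x | x \in A} :=
  exist _ (f (val z)) (fclosed_in (valP z)).

Lemma sub_fun_inj : injective sub_fun.
Proof. by move=> x y /(congr1 val) /f_inj /val_inj. Qed.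

Definition sub_perm : {perm {x | x \in A}} := perm sub_fun_inj.

Lemma sub_permE z : val (sub_perm z) = f (val z).
Proof. by rewrite permE. Qed.

Lemma card_porbits_sub (p : {perm {x | x \in A}}) :
  (forall z, val (p z) = f (val z)) -> #|porbits p| = fcard f A.
Proof.
move=> pE.
have val_iter i z : val ((p ^+ i)%g z) = iter i f (val z).
  elim: i => [|i IH]; first by rewrite expg0 perm1.
  by rewrite expgSr permM pE IH.
have val_porbit z : val @: porbit p z = [set y | fconnect f (val z) y].
  apply/setP=> y; rewrite inE; apply/imsetP/idP => [[w /porbitP[i ->] ->]|].
    by rewrite val_iter fconnect_iter.
  move/iter_findex => hy.
  have yA : y \in A.
    by rewrite -hy -(closed_connect clA (fconnect_iter f _ (val z))) (valP z).
  by exists ((p ^+ findex f (val z) y)%g z); rewrite ?mem_porbit // val_iter.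
rewrite (fcard_orbit_sets f_inj clA) -(card_imset (porbits p) (imset_inj val_inj)).
apply: eq_card => S; apply/imsetP/imsetP.
  case=> S' /imsetP[z _ ->] ->; exists (val z); first exact: valP.
  exact: val_porbit.
case=> x xA ->; exists (porbit p (Sub x xA)); first exact: imset_f.
by rewrite val_porbit.
Qed.

End SubPerm.

Section PermGenus.
Variable X : finType.
Implicit Types (a b s : {perm X}) (S : {set X}).
Local Open Scope group_scope.

Lemma porbit_fixed s y : s y = y -> porbit s y = [set y].
Proof.
move=> sy; apply/setP=> z; rewrite inE; apply/porbitP/eqP => [[i ->]|->];
  last by exists 0%N; rewrite expg0 perm1.
elim: i => [|i IH]; first by rewrite expg0 perm1.
by rewrite expgSr permM IH sy.
Qed.

Lemma card_porbits1 : #|porbits (1 : {perm X})| = #|X|.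
Proof.
rewrite /porbits (eq_imset _ (fun x => porbit_fixed (perm1 x))).
by rewrite card_imset //; apply: set1_inj.
Qed.

Lemma porbit_sub s S z :
  {in S, forall x, s x \in S} -> z \in S -> porbit s z \subset S.
Proof.
move=> clS zS; apply/subsetP=> y /porbitP[i ->].
elim: i => [|i IH]; first by rewrite expg0 perm1.
by rewrite expgSr permM; apply: clS.
Qed.

Lemma porbit_subV s S : {in S, forall x, s x \in S} -> {in S, forall x, s^-1 x \in S}.
Proof.
move=> clS z zS; apply: (subsetP (porbit_sub clS zS)).
by rewrite -porbitV; have := mem_porbit s^-1 1 z; rewrite expg1.
Qed.

Lemma porbits_tperm_mul_le s x y : #|porbits (tperm x y * s)| <= #|porbits s| + 1.
Proof.
by have := porbits_mul_tperm s x y; case: (_ \notin _); case: (_ != _) => /=; lia.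
Qed.

Lemma porbits_tperm_mul_merge s x y :
  x \notin porbit s y -> #|porbits (tperm x y * s)| + 1 = #|porbits s|.
Proof.
move=> xy; have := porbits_mul_tperm s x y; rewrite /= xy.
have -> : x != y by apply: contraNneq xy => ->; apply: porbit_id.
by rewrite /= -mul2n; lia.
Qed.

Definition moved b := [set x | b x != x].

Lemma moved_eq0 b : moved b = set0 -> b = 1.
Proof.
by move/setP=> b1; apply/permP=> z; have := b1 z; rewrite !inE perm1 => /negbFE/eqP.
Qed.

Section Peel.
Variables (b : {perm X}) (x : X).
Hypotheses (bK : involutive b) (bx : b x != x).
Let t := tperm x (b x).

Definition peel := t * b.

Lemma peelE z : peel z = b (t z). Proof. by rewrite permM. Qed.

Lemma peel_fix z : (z == x) || (z == b x) -> peel z = z.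
Proof. by case/orP=> /eqP->; rewrite peelE ?tpermL ?tpermR ?bK. Qed.

Lemma peel_other z : z != x -> z != b x -> peel z = b z.
Proof. by move=> zx zy; rewrite peelE tpermD // eq_sym. Qed.

Lemma peelK : involutive peel.
Proof.
move=> z; case: (eqVneq z x) => [->|zx]; first by rewrite !peel_fix ?eqxx.
case: (eqVneq z (b x)) => [->|zy]; first by rewrite !peel_fix ?eqxx ?orbT.
have bzx : b z != x by apply: contra_neq zy => <-; rewrite bK.
have bzy : b z != b x by rewrite (inj_eq (@perm_inj _ b)).
by rewrite (peel_other zx zy) (peel_other bzx bzy) bK.
Qed.

Lemma mul_peel : b = t * peel.
Proof. by rewrite /peel mulgA tperm2 mul1g. Qed.

Lemma peelC : t * peel = peel * t.
Proof.
apply/permP=> z; rewrite (permM t peel) (permM peel t).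
case: (eqVneq z x) => [->|zx]; first by rewrite tpermL !peel_fix ?eqxx ?orbT // tpermL.
case: (eqVneq z (b x)) => [->|zy].
  by rewrite tpermR !peel_fix ?eqxx ?orbT // tpermR.
rewrite tpermD 1?eq_sym // peel_other // tpermD // 1?eq_sym.
  by apply: contra_neq zy => <-; rewrite bK.
by rewrite (inj_eq (@perm_inj _ b)).
Qed.

Lemma moved_peel : #|moved peel| < #|moved b|.
Proof.
apply: proper_card; apply/properP; split.
  apply/subsetP=> z; rewrite !inE => hz.
  have zx : z != x by apply: contra_neq hz => ->; rewrite peel_fix ?eqxx.
  have zy : z != b x by apply: contra_neq hz => ->; rewrite peel_fix ?eqxx ?orbT.
  by rewrite -peel_other.
by exists x; rewrite !inE ?bx // peel_fix ?eqxx.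
Qed.

Lemma card_porbits_peel : #|porbits peel| = #|porbits b| + 1.
Proof.
have := porbits_mul_tperm peel x (b x).
rewrite /= -mul_peel porbit_fixed ?peel_fix ?eqxx ?orbT // inE eq_sym bx /=.
lia.
Qed.

End Peel.

Lemma porbits_involution_mul b a : involutive b ->
  #|porbits b| + #|porbits (b * a)| <= #|porbits a| + #|X|.
Proof.
have [n] := ubnP #|moved b|; elim: n b => // n IH b lt_bn bK.
have [/moved_eq0-> | [x]] := set_0Vmem (moved b).
  by rewrite mul1g card_porbits1 addnC.
rewrite inE => bx.
have hn' : #|moved (peel b x)| < n by rewrite (leq_trans (moved_peel bK bx)).
have IHb := IH _ hn' (peelK x bK).
have := porbits_tperm_mul_le (peel b x * a) x (b x).
rewrite mulgA -mul_peel => le_ba.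
rewrite (card_porbits_peel bK bx) addnAC in IHb.
by apply: leq_trans IHb; rewrite -addnA leq_add2l.
Qed.

Definition perm_transitive a b := forall S,
  {in S, forall z, a z \in S} -> {in S, forall z, b z \in S} -> S = set0 \/ S = setT.

Lemma card_porbits_le1 a b : perm_transitive a b ->
  (forall z, b z \in porbit a z) -> #|porbits a| <= 1.
Proof.
move=> trab ba.
suff porbitT z : porbit a z = setT.
  rewrite -(cards1 (setT : {set X})); apply: subset_leq_card.
  by apply/subsetP=> S /imsetP[z _ ->]; rewrite porbitT inE.
have sameS w : w \in porbit a z -> porbit a w = porbit a z.
  by move=> wz; apply/eqP; rewrite eq_porbit_mem.
have clA : {in porbit a z, forall w, a w \in porbit a z}.
  by move=> w /sameS <-; rewrite -(expg1 a) mem_porbit.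
have clB : {in porbit a z, forall w, b w \in porbit a z} by move=> w /sameS <-.
have [S0|//] := trab _ clA clB.
by have := porbit_id a z; rewrite S0 inE.
Qed.

(* Euler's inequality [V - E + F <= 2] for the connected map with faces [a],
   edges [b] and vertices [b * a].  If [b x] is not on the [a]-cycle of [x],
   moving the transposition [t] from [b] into [a] merges two faces, splits an
   edge, and leaves [b * a] and transitivity unchanged. *)
Lemma genus_bound b a : involutive b -> perm_transitive a b ->
  #|porbits a| + #|porbits b| + #|porbits (b * a)| <= #|X| + 2.
Proof.
have [n] := ubnP #|moved b|; elim: n b a => // n IH b a lt_bn bK trab.
have [x /= bx | ba] := pickP [pred z | b z \notin porbit a z]; last first.
  have := porbits_involution_mul a bK.
  have := card_porbits_le1 trab (fun z => negbFE (ba z)); lia.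
have bxx : b x != x by apply: contraNneq bx => ->; apply: porbit_id.
pose t := tperm x (b x); pose a' := t * a; pose b' := peel b x.
have hn' : #|moved b'| < n by rewrite (leq_trans (moved_peel bK bxx)).
have card_a' : #|porbits a'| + 1 = #|porbits a|.
  by apply: porbits_tperm_mul_merge; rewrite porbit_sym.
have ta' : t * a' = a by rewrite /a' mulgA tperm2 mul1g.
have xa'bx : x \in porbit a' (b x).
  by apply/negPn/negP => /porbits_tperm_mul_merge; rewrite -/t ta'; lia.
have tS S : {in S, forall z, a' z \in S} -> {in S, forall z, t z \in S}.
  move=> clS z zS; have Sa'z := subsetP (porbit_sub clS zS).
  have [zx|zx] := eqVneq z x; first by rewrite zx tpermL Sa'z // porbit_sym zx.
  have [zbx|zbx] := eqVneq z (b x); first by rewrite zbx tpermR Sa'z // zbx.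
  by rewrite tpermD // eq_sym.
have tra'b' : perm_transitive a' b'.
  move=> S clA clB; apply: trab => z zS.
    by rewrite -[z](tpermK x (b x)) -/t -permM -/a' clA ?tS.
  by rewrite (mul_peel b x) permM clB ?tS.
have ba : b * a = b' * a' by rewrite {1}(mul_peel b x) (peelC x bK) -mulgA.
have IHb := IH b' a' hn' (peelK x bK) tra'b'.
rewrite -ba (card_porbits_peel bK bxx) in IHb.
suff -> : #|porbits a| + #|porbits b| = #|porbits a'| + (#|porbits b| + 1) by [].
by rewrite -card_a' addnAC addnA.
Qed.

End PermGenus.

Section OuterFaceOfSubgraph.
Variables (D V : finType) (tail : D -> V) (alpha sigma : D -> D)
  (reflex : pred D) (o : D) (VH : {set V}) (EH : {set D}).
Hypotheses (sigma_inj : injective sigma) (alphaK : involutive alpha)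
  (alpha_neq : forall d, alpha d != d)
  (fconnect_sigma : forall d e, fconnect sigma d e = (tail d == tail e))
  (connect_adj : forall u v, connect (adj tail alpha) u v)
  (euler : #|V| + fcard (phi alpha sigma) D = #|D|./2 + 2)
  (no_loop : forall d, tail (alpha d) != tail d)
  (no_multi_edge : forall d e,
     tail d = tail e -> tail (alpha d) = tail (alpha e) -> d = e)
  (convex3 : forall d, ~~ same_face alpha sigma o d ->
     #|[set e | same_face alpha sigma d e & ~~ reflex e]| = 3)
  (reflex1 : forall v, #|[set d | (tail d == v) & reflex d]| = 1)
  (face_size : forall d, ~~ same_face alpha sigma o d ->
     (fingraph.order (phi alpha sigma) d == 3) ||
     (fingraph.order (phi alpha sigma) d == 4))
  (subH : subgraph tail alpha VH EH).

Local Notation ph := (phi alpha sigma).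

Definition outer : pred D := [pred d | same_Hface alpha sigma EH o d].
Definition inner : pred D := [predC outer].

(* [halpha] glues the two sides of each edge of T outside H; [hsigma] walks
   along the boundary of a face of H, following a face of T at darts of H and
   turning around the vertex at the other darts. *)
Definition halpha d := if d \in EH then d else alpha d.
Definition hsigma d := ph (halpha d).

Lemma alpha_inj : injective alpha. Proof. exact: inv_inj. Qed.
Lemma ph_inj : injective ph. Proof. by move=> x y /sigma_inj /alpha_inj. Qed.
Lemma sigmaE d : sigma d = ph (alpha d). Proof. by rewrite /phi alphaK. Qed.

Lemma tail_sigma d : tail (sigma d) = tail d.
Proof. by apply/esym/eqP; rewrite -fconnect_sigma fconnect1. Qed.

Lemma tail_ph d : tail (ph d) = tail (alpha d). Proof. exact: tail_sigma. Qed.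

Lemma EH_alpha d : (alpha d \in EH) = (d \in EH).
Proof.
apply/idP/idP => h; last by case/andP: (subH h).
by rewrite -[d]alphaK; case/andP: (subH h).
Qed.

Lemma EH_VH d : d \in EH -> tail d \in VH.
Proof. by case/subH/andP. Qed.

Lemma halphaK : involutive halpha.
Proof.
move=> d; rewrite /halpha; have [dE|dE] := boolP (d \in EH); first by rewrite dE.
by rewrite EH_alpha (negbTE dE) alphaK.
Qed.

Lemma hsigma_inj : injective hsigma.
Proof. by move=> x y /ph_inj /(inv_inj halphaK). Qed.

Lemma hstep_sym : symmetric (hstep alpha sigma EH).
Proof.
move=> d e; rewrite /hstep orbCA; congr (_ || (_ || _)).
by apply/andP/andP => [[hd /eqP->]|[he /eqP->]]; rewrite ?EH_alpha ?alphaK.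
Qed.

Lemma outer_closed : closed (hstep alpha sigma EH) outer.
Proof.
apply: (intro_closed (sym_connect_sym hstep_sym)) => x y xy.
by rewrite !inE => /connect_trans; apply; apply: connect1.
Qed.

Lemma outer_ph d : (ph d \in outer) = (d \in outer).
Proof. by apply/esym/outer_closed; rewrite /hstep eqxx. Qed.

Lemma outer_alpha_notin_EH d : d \notin EH -> (alpha d \in outer) = (d \in outer).
Proof. by move=> dE; apply/esym/outer_closed; rewrite /hstep dE eqxx !orbT. Qed.

Lemma outer_halpha d : (halpha d \in outer) = (d \in outer).
Proof. by rewrite /halpha; case: ifPn => // /outer_alpha_notin_EH. Qed.

Lemma outer_fclosed_ph : fclosed ph outer.
Proof. by move=> x _ /eqP <-; rewrite outer_ph. Qed.

Lemma outer_fclosed_halpha : fclosed halpha outer.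
Proof. by move=> x _ /eqP <-; rewrite outer_halpha. Qed.

Lemma outer_fclosed_hsigma : fclosed hsigma outer.
Proof. by move=> x _ /eqP <-; rewrite /hsigma outer_ph outer_halpha. Qed.

Lemma outer_same_face d : same_face alpha sigma o d -> d \in outer.
Proof.
move=> od; rewrite inE /same_Hface; apply: connect_sub od => x _ /eqP <-.
by apply: connect1; rewrite /hstep eqxx.
Qed.

Lemma reflex_inj : {in reflex &, injective tail}.
Proof.
move=> d1 d2 r1 r2 e; have /eqP/cards1P[x hx] := reflex1 (tail d1).
have : d1 \in [set d | (tail d == tail d1) & reflex d] by rewrite inE eqxx; apply: r1.
have : d2 \in [set d | (tail d == tail d1) & reflex d] by rewrite inE e eqxx; apply: r2.
by rewrite hx !inE => /eqP-> /eqP->.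
Qed.

Lemma reflex_at v : exists2 d, tail d = v & reflex d.
Proof.
have /card_gt0P[d] : 0 < #|[set d | (tail d == v) & reflex d]| by rewrite reflex1.
by rewrite inE => /andP[/eqP]; exists d.
Qed.

Lemma card_reflex : #|V| = #|reflex|.
Proof.
rewrite -(card_in_imset reflex_inj) -cardsT; apply: eq_card => v.
by rewrite !inE; have [d <- rd] := reflex_at v; apply/esym/imsetP; exists d.
Qed.

Lemma inner_interior d : d \in inner -> ~~ same_face alpha sigma o d.
Proof. by apply: contra; apply: outer_same_face. Qed.

Lemma card_face_convex d : d \in inner ->
  #|[predI fconnect ph d & predC reflex]| = 3.
Proof.
by move=> dI; rewrite -(convex3 (inner_interior dI)); apply: eq_card => e; rewrite !inE.
Qed.

Lemma card_inner_convex : #|[predI inner & predC reflex]| = 3 * fcard ph inner.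
Proof.
rewrite (card_fclosed_sum ph_inj _ (predC_closed outer_fclosed_ph)).
rewrite (eq_bigr (fun _ => 3)) => [|r /andP[_ rI]]; last exact: card_face_convex.
by rewrite sum_nat_const mulnC.
Qed.

Lemma card_inner_reflex : #|[predI inner & reflex]| <= fcard ph inner.
Proof.
rewrite (card_fclosed_sum ph_inj _ (predC_closed outer_fclosed_ph)).
rewrite /n_comp_mem -sum1_card; apply: leq_sum => r /andP[_ rI].
have := face_size (inner_interior rI); rewrite /fingraph.order -(cardID reflex).
have -> : #|[predD fconnect ph r & reflex]| = 3.
  by rewrite -(card_face_convex rI); apply: eq_card => e; rewrite !inE andbC.
by case/orP=> /eqP; rewrite addn3 => -[->].
Qed.

Lemma card_darts : #|D| = 2 * fcard alpha D.
Proof.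
have := @card_involution_fcard _ _ alpha_inj predT alphaK (fun _ _ _ => erefl).
rewrite (eq_card0 (A := [predI _ & _])) ?addn0 => [<-|d]; first exact: eq_card.
by rewrite !inE (negbTE (alpha_neq d)).
Qed.

Lemma card_outer_halpha :
  #|outer| + #|[predI outer & mem EH]| = 2 * fcard halpha outer.
Proof.
rewrite -(card_involution_fcard (inv_inj halphaK) halphaK outer_fclosed_halpha).
congr (_ + _); apply: eq_card => d; rewrite !inE /halpha.
by case: ifP => _; rewrite ?eqxx ?(negbTE (alpha_neq d)).
Qed.

Lemma perm_transitive_outer :
  perm_transitive (sub_perm ph_inj outer_fclosed_ph)
                  (sub_perm (inv_inj halphaK) outer_fclosed_halpha).
Proof.
set pa := sub_perm _ _; set pb := sub_perm _ _.
move=> S clA clB; have [->|[z0 z0S]] := set_0Vmem S; [by left | right].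
apply/setP=> x; rewrite inE.
pose P : pred D := [pred d | [exists z in S, val z == d]].
have clP : closed (hstep alpha sigma EH) P.
  apply: (intro_closed (sym_connect_sym hstep_sym)) => d e de.
  case/existsP=> z /andP[zS /eqP dz].
  apply/existsP; case/or3P: de => [/eqP->|/eqP ed|/andP[dE /eqP->]].
  - by exists (pa z); rewrite sub_permE dz eqxx clA.
  - exists (pa^-1 z)%g; rewrite porbit_subV //=; apply/eqP/ph_inj.
    by rewrite -(sub_permE ph_inj outer_fclosed_ph) permKV dz ed.
  - by exists (pb z); rewrite sub_permE dz /halpha (negbTE dE) eqxx clB.
have z0x : connect (hstep alpha sigma EH) (val z0) (val x).
  by apply: connect_trans (valP x); rewrite (sym_connect_sym hstep_sym); apply: valP.
have : val z0 \in P by rewrite inE; apply/existsP; exists z0; rewrite z0S eqxx.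
by rewrite (closed_connect clP z0x) => /existsP[z /andP[zS /eqP/val_inj <-]].
Qed.

Lemma outer_genus :
  fcard ph outer + fcard halpha outer + fcard hsigma outer <= #|outer| + 2.
Proof.
set pa := sub_perm ph_inj outer_fclosed_ph.
set pb := sub_perm (inv_inj halphaK) outer_fclosed_halpha.
have pbK : involutive pb by move=> z; apply: val_inj; rewrite !sub_permE halphaK.
have pbaE z : val ((pb * pa)%g z) = hsigma (val z) by rewrite permM !sub_permE.
have := genus_bound pbK perm_transitive_outer.
rewrite (card_porbits_sub ph_inj outer_fclosed_ph (sub_permE _ _)).
rewrite (card_porbits_sub (inv_inj halphaK) outer_fclosed_halpha (sub_permE _ _)).
by rewrite (card_porbits_sub hsigma_inj outer_fclosed_hsigma pbaE) card_sig.
Qed.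

Definition outer_reflex_H : pred D :=
  [pred d | [&& reflex d, d \in outer & tail d \in VH]].
Definition outer_reflex_notH : pred D :=
  [pred d | [&& reflex d, d \in outer & tail d \notin VH]].

Lemma card_reflex_split : #|reflex| =
  #|outer_reflex_H| + #|outer_reflex_notH| + #|[predI inner & reflex]|.
Proof.
rewrite -(cardID outer) -(cardID [pred d | tail d \in VH] [predI reflex & outer]).
congr (_ + _ + _); apply: eq_card => d; rewrite !inE -[d \in reflex]/(reflex d);
  by case: (reflex d); case: (same_Hface _ _ _ _ _); case: (tail d \in VH).
Qed.

Lemma card_reflex_in_outer_H :
  #|[set v in VH | reflex_in_outer_H tail alpha sigma reflex o EH v]| =
  #|outer_reflex_H|.
Proof.
have reflexH : {subset outer_reflex_H <= reflex} by move=> d /andP[].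
rewrite -(card_in_imset (sub_in2 reflexH reflex_inj)); apply: eq_card => v.
rewrite !inE; apply/andP/imsetP => [[vH /existsP[d /and3P[/eqP tv rd dO]]]|].
  by exists d; rewrite // -tv in vH; apply/and3P.
case=> d /and3P[rd dO dH] ->; split=> //.
by apply/existsP; exists d; rewrite eqxx rd.
Qed.

(* Turning around [tail z] only crosses edges outside H, hence stays in the
   outer face of H until it reaches a dart of H. *)
Lemma outer_EH_at z e : z \in outer -> e \in EH -> tail z = tail e ->
  exists d, [/\ d \in outer, d \in EH & tail d = tail z].
Proof.
move=> zO eE tze.
have ex : exists n, iter n sigma z \in EH.
  by exists (findex sigma z e); rewrite iter_findex // fconnect_sigma tze.
case: (ex_minnP ex) => m mE minm; exists (iter m sigma z); split=> //; last first.
  by apply/esym/eqP; rewrite -fconnect_sigma fconnect_iter.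
suff outer_iter i : i <= m -> iter i sigma z \in outer by apply: outer_iter.
elim: i => [//|i IH] im /=.
have iE : iter i sigma z \notin EH by apply: contraTN im => /minm; rewrite -leqNgt.
by rewrite sigmaE outer_ph outer_alpha_notin_EH // IH // ltnW.
Qed.

Lemma hsigma_tail x y : tail x \notin VH -> fconnect hsigma x y -> tail y = tail x.
Proof.
move=> xH /iter_findex <-; elim: (findex hsigma x y) => [|n IH] //=.
have nE : iter n hsigma x \notin EH by apply: contra xH => /EH_VH; rewrite IH.
by rewrite /hsigma /halpha (negbTE nE) -sigmaE tail_sigma.
Qed.

Definition boundary d := [&& d \in outer, d \in EH & alpha d \notin outer].

Section Boundary.
Variable d0 : D.
Hypothesis d0B : boundary d0.

Lemma three_le_outer_EH : 3 <= #|[predI outer & mem EH]|.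
Proof.
case/and3P: d0B => d0O d0E ad0.
have [d1 [d1O d1E td1]] := outer_EH_at (etrans (outer_ph d0) d0O)
  (etrans (EH_alpha d0) d0E) (tail_ph d0).
have [d2 [d2O d2E td2]] := outer_EH_at (etrans (outer_ph d1) d1O)
  (etrans (EH_alpha d1) d1E) (tail_ph d1).
rewrite tail_ph in td1; rewrite tail_ph in td2.
have d01 : d0 != d1 by apply: contraNneq (no_loop d0) => e01; rewrite -td1 -e01.
have d12 : d1 != d2 by apply: contraNneq (no_loop d1) => e12; rewrite -td2 -e12.
have d02 : d0 != d2.
  apply: contraNneq ad0 => e02; suff <- : d1 = alpha d0 by [].
  by apply: no_multi_edge; rewrite ?alphaK // -td2 -e02.
have U : uniq [:: d0; d1; d2] by rewrite /= !inE negb_or d01 d02 d12.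
rewrite -[3]/(size [:: d0; d1; d2]) -(card_uniqP U).
by apply/subset_leq_card/subsetP => d; rewrite !inE => /or3P[] /eqP->; apply/andP.
Qed.

(* Each hsigma-orbit through a dart at a vertex outside H stays at that
   vertex, so it meets one reflex angle and misses [d0]. *)
Lemma card_outer_reflex_notH : #|outer_reflex_notH| < fcard hsigma outer.
Proof.
case/and3P: d0B => d0O d0E _.
pose cls x := [set y | fconnect hsigma x y].
have d0H : d0 \notin outer_reflex_notH by rewrite inE (EH_VH d0E) !andbF.
have cls_eq x y : cls x = cls y -> fconnect hsigma x y.
  by move/setP/(_ y); rewrite !inE connect0 => ->.
have notH_tail x y : x \in outer_reflex_notH -> fconnect hsigma x y -> tail y = tail x.
  by case/and3P=> _ _; apply: hsigma_tail.
have cls_inj : {in d0 |: [set x | outer_reflex_notH x] &, injective cls}.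
  move=> x y; rewrite !inE => /predU1P[->|xH] /predU1P[->|yH] // /cls_eq.
  - rewrite (fconnect_sym hsigma_inj) => /(notH_tail _ _ yH) ty.
    by case/and3P: yH => _ _; rewrite -ty (EH_VH d0E).
  - move=> /(notH_tail _ _ xH) tx.
    by case/and3P: xH => _ _; rewrite -tx (EH_VH d0E).
  - move=> xy; case/and3P: (xH) => rx _ _; case/and3P: (yH) => ry _ _.
    exact/reflex_inj/esym/(notH_tail _ _ xH).
rewrite (fcard_orbit_sets hsigma_inj outer_fclosed_hsigma).
have := card_in_imset cls_inj; rewrite cardsU1 inE d0H cardsE add1n => <-.
apply/subset_leq_card/subsetP => _ /imsetP[x xO ->]; apply: imset_f.
by move: xO; rewrite !inE => /predU1P[->|/and3P[]].
Qed.

End Boundary.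

Lemma three_le_outer_reflex_H_boundary d0 : boundary d0 -> 3 <= #|outer_reflex_H|.
Proof.
move=> d0B.
have eulerT : #|V| + (fcard ph outer + fcard ph inner) = fcard alpha D + 2.
  by rewrite -n_compC euler card_darts mul2n doubleK.
have darts : #|outer| + #|inner| = 2 * fcard alpha D by rewrite cardC card_darts.
have inner_split : #|inner| = #|[predI inner & reflex]| + #|[predI inner & predC reflex]|.
  rewrite -(cardID reflex inner); congr (_ + _).
  by apply: eq_card => d; rewrite !inE andbC.
have := card_inner_convex; have := card_inner_reflex.
have := card_outer_halpha; have := outer_genus.
have := three_le_outer_EH d0B; have := card_outer_reflex_notH d0B.
have := card_reflex_split; rewrite -card_reflex.
lia.
Qed.

Lemma adj_sym : symmetric (adj tail alpha).
Proof.
suff adjC u v : adj tail alpha u v -> adj tail alpha v u.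
  by move=> u v; apply/idP/idP; apply: adjC.
by case/existsP=> d /andP[tu tv]; apply/existsP; exists (alpha d); rewrite alphaK tu tv.
Qed.

Lemma outer_all : (forall d, ~~ boundary d) -> forall d, d \in outer.
Proof.
move=> noB.
have outer_alpha d : d \in outer -> alpha d \in outer.
  move=> dO; have [dE|dE] := boolP (d \in EH); last by rewrite outer_alpha_notin_EH.
  by have := noB d; rewrite /boundary dO dE /= negbK.
have outer_tail d e : d \in outer -> tail d = tail e -> e \in outer.
  move=> dO /eqP; rewrite -fconnect_sigma => /iter_findex <-.
  by elim: findex => //= n IH; rewrite sigmaE outer_ph outer_alpha.
pose outer_at : pred V := [pred v | [forall d, (tail d == v) ==> (d \in outer)]].
have clV : closed (adj tail alpha) outer_at.
  apply: (intro_closed (sym_connect_sym adj_sym)) => u v.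
  case/existsP=> c /andP[/eqP cu /eqP cv].
  move=> /forallP/(_ c); rewrite cu eqxx /= => cO; apply/forallP => d.
  by apply/implyP => /eqP dv; apply: outer_tail (outer_alpha _ cO) _; rewrite cv.
have oV : tail o \in outer_at.
  apply/forallP => d; apply/implyP => /eqP od; apply: outer_tail (esym od).
  by rewrite inE; apply: connect0.
move=> d; move: oV; rewrite (closed_connect clV (connect_adj (tail o) (tail d))).
by move/forallP/(_ d); rewrite eqxx.
Qed.

Lemma three_le_reflex_in_outer_H : 3 <= #|VH| ->
  3 <= #|[set v in VH | reflex_in_outer_H tail alpha sigma reflex o EH v]|.
Proof.
move=> VH3; have [d0 d0B | noB] := pickP boundary.
  by rewrite card_reflex_in_outer_H; apply: three_le_outer_reflex_H_boundary d0B.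
apply: leq_trans VH3 (subset_leq_card _); apply/subsetP => v vH.
have [d dv rd] := reflex_at v; rewrite inE vH; apply/existsP; exists d.
by rewrite dv eqxx rd; apply: (outer_all (fun d => negbT (noB d))).
Qed.

End OuterFaceOfSubgraph.

Theorem lemma1 (D V : finType) (tail : D -> V) (alpha sigma : D -> D)
    (reflex : pred D) (o : D) (VH : {set V}) (EH : {set D}) :
  comb_4PPT tail alpha sigma reflex o ->
  subgraph tail alpha VH EH ->
  3 <= #|VH| ->
  3 <= #|[set v in VH | reflex_in_outer_H tail alpha sigma reflex o EH v]|.
Proof.
case=> [[[sigma_inj alphaK] alpha_neq fconnect_sigma _ [connect_adj euler]]
        [no_loop no_multi_edge] [convex3 _ reflex1] face_size] subH.
exact: three_le_reflex_in_outer_H sigma_inj alphaK alpha_neq fconnect_sigma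
  connect_adj euler no_loop no_multi_edge convex3 reflex1 face_size subH.
Qed.
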